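(* Let $p\in(p_c,1]$. Then $\mathcal{D}_{I^p}:=\{x\in\mathbb{R}^d:I^p(x)<\infty\}=\{x\in\mathbb{R}^d:\mu^p(x)\le1\}$, and $I^p(x)\le\log(2d)$ for all $x\in\mathcal{D}_{I^p}$.
   Context: Bond percolation on $\mathbb{Z}^d$ ($d\ge2$) with parameter $p>p_c$ ($p_c$ the critical probability), infinite cluster $\mathcal{C}_\infty$, chemical distance $d_\omega$. Simple random walk on open edges, travel cost $a_\lambda(x,y,\omega)=-\log E^x_\omega[e^{-\lambda H(y)}\mathbf 1\{H(y)<\infty\}]$. Lyapunov exponent $\alpha^p_\lambda$: the norm such that a.s. on $\{0\in\mathcal{C}_\infty\}$, $(a_\lambda(0,x,\omega)-\alpha^p_\lambda(x))/\|x\|_1\to0$ along $x\in\mathcal{C}_\infty$. Rate function $I^p(x)=\sup_{\lambda\ge0}(\alpha^p_\lambda(x)-\lambda)$. Time constant $\mu^p$: the norm with $d_\omega(0,kx)/k\to\mu^p(x)$ a.s. on $\{0\in\mathcal{C}_\infty\}$ along $k$ with $kx\in\mathcal{C}_\infty$. *)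

From HB Require Import structures.
From mathcomp Require Import all_boot all_order all_algebra.
From mathcomp Require Import all_classical all_reals all_analysis.
Unset Printing Implicit Defensive.
Import Order.TTheory GRing.Theory Num.Theory.
Local Open Scope classical_set_scope.
Local Open Scope ring_scope.

Definition vertex (d : nat) := 'rV[int]_d.
Definition unitv (d : nat) (i : 'I_d) : vertex d := delta_mx 0 i.
Arguments unitv {d}.
(* Nearest-neighbour edges of Z^d: the pair (x, i) encodes the edge {x, x+e_i}
   (each edge has exactly one such representation). *)
Definition edge (d : nat) := (vertex d * 'I_d)%type.
Definition config0 (d : nat) := edge d -> bool.
Definition cylinders (d : nat) : set (set (config0 d)) :=
  [set A | exists (e : edge d) (b : bool), A = [set w | w e = b]].
Definition config (d : nat) := g_sigma_algebraType (cylinders d).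

Definition bernoulli_perc (R : realType) (d : nat)
    (P : probability (config d) R) (p : R) : Prop :=
  forall (s : seq (edge d)) (b : edge d -> bool), uniq s ->
    P [set w : config d | forall e, e \in s -> w e = b e]
    = (\prod_(e <- s) (if b e then p else 1 - p))%:E.
Arguments bernoulli_perc {R d}.

Definition nbr (d : nat) (x : vertex d) (i : 'I_d) (s : bool) : vertex d :=
  if s then x + unitv i else x - unitv i.
Arguments nbr {d}.
Definition open_b (d : nat) (w : config d) (x : vertex d) (i : 'I_d) (s : bool) : bool :=
  if s then w (x, i) else w (x - unitv i, i).
Arguments open_b {d}.
Definition open_adj (d : nat) (w : config d) (x y : vertex d) : Prop :=
  exists (i : 'I_d) (s : bool), y = nbr x i s /\ open_b w x i s.
Arguments open_adj {d}.

Fixpoint reach (d : nat) (w : config d) (n : nat) (x y : vertex d) : Prop :=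
  match n with
  | 0 => x = y
  | n'.+1 => exists z, open_adj w x z /\ reach d w n' z y
  end.
Arguments reach {d}.

Definition cluster (d : nat) (w : config d) (x : vertex d) : set (vertex d) :=
  [set y | exists n, reach w n x y].
Arguments cluster {d}.
Definition Cinf (d : nat) (w : config d) : set (vertex d) :=
  [set x | infinite_set (cluster w x)].

Arguments Cinf {d}.
Definition p_c (R : realType) (d : nat) : \bar R :=
  ereal_sup [set p%:E | p in [set p : R | 0 <= p <= 1 /\
     forall P : probability (config d) R, bernoulli_perc P p ->
       P.-negligible [set w : config d | Cinf w 0]]].

(* Chemical distance (graph distance in the open subgraph), +oo if not connected. *)
Definition chem_dist (R : realType) (d : nat) (w : config d) (x y : vertex d) : \bar R :=
  ereal_inf [set (n%:R)%:E | n in [set n | reach w n x y]].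
Arguments chem_dist R {d}.

(* Simple random walk on open edges: from x it jumps to each open neighbour
   with probability 1 / (number of open edges at x). *)
Definition degree (d : nat) (w : config d) (x : vertex d) : nat :=
  \sum_(i < d) \sum_(s : bool) (open_b w x i s : nat).
Arguments degree {d}.

(* hitp n x y = P^x_omega(H(y) = n), with H(y) = inf {n >= 0 : X_n = y}. *)
Fixpoint hitp (R : realType) (d : nat) (w : config d) (n : nat) (x y : vertex d) : R :=
  match n with
  | 0 => if x == y then 1 else 0
  | n'.+1 => if x == y then 0 else
      \sum_(i < d) \sum_(s : bool)
        ((open_b w x i s)%:R / (degree w x)%:R) * hitp R d w n' (nbr x i s) y
  end.
Arguments hitp R {d}.

Definition hit_gen (R : realType) (d : nat) (lam : R) (w : config d) (x y : vertex d) : \bar R :=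
  \sum_(n <oo) (expR (- lam * n%:R) * hitp R w n x y)%:E.
Arguments hit_gen {R d}.

Definition travel_cost (R : realType) (d : nat) (lam : R) (w : config d) (x y : vertex d) : \bar R :=
  if hit_gen lam w x y == 0%E then +oo%E else (- ln (fine (hit_gen lam w x y)))%:E.
Arguments travel_cost {R d}.

Definition toR (R : realType) (d : nat) (x : vertex d) : 'rV[R]_d := map_mx (fun z : int => z%:~R) x.
Arguments toR R {d}.
Definition norm1 (R : realType) (d : nat) (x : vertex d) : R := \sum_(i < d) `|(x 0 i)%:~R : R|.


Arguments norm1 R {d}.

Definition seminorm (R : realType) (d : nat) (f : 'rV[R]_d -> R) : Prop :=
  (forall x y, f (x + y) <= f x + f y) /\ (forall (t : R) x, f (t *: x) = `|t| * f x).
Arguments seminorm {R d}.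

Definition lyapunov_prop (R : realType) (d : nat) (P : probability (config d) R)
    (lam : R) (alpha : 'rV[R]_d -> R) : Prop :=
  {ae P, forall w : config d, Cinf w 0 ->
     forall eps : R, 0 < eps -> exists N : R, forall x : vertex d,
       Cinf w x -> N <= norm1 R x ->
       ((alpha (toR R x) - eps * norm1 R x)%:E <= travel_cost lam w 0%R x /\
        travel_cost lam w 0%R x <= (alpha (toR R x) + eps * norm1 R x)%:E)%E}.
Arguments lyapunov_prop {R d}.

Definition time_constant_prop (R : realType) (d : nat) (P : probability (config d) R)
    (mu : 'rV[R]_d -> R) : Prop :=
  forall x : vertex d, {ae P, forall w : config d, Cinf w 0 ->
     forall eps : R, 0 < eps -> exists K : nat, forall k : nat,
       (K <= k)%N -> Cinf w (x *+ k) ->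
       (((mu (toR R x) - eps) * k%:R)%:E <= chem_dist R w 0%R (x *+ k)%R /\
        chem_dist R w 0%R (x *+ k)%R <= ((mu (toR R x) + eps) * k%:R)%:E)%E}.
Arguments time_constant_prop {R d}.

Definition rate (R : realType) (d : nat) (alpha : R -> 'rV[R]_d -> R) (x : 'rV[R]_d) : \bar R :=
  ereal_sup [set (alpha lam x - lam)%:E | lam in [set lam : R | 0 <= lam]].
Arguments rate {R d}.

From HB Require Import structures.
From mathcomp Require Import all_boot all_order all_algebra.
From mathcomp Require Import all_classical all_reals all_analysis.
From mathcomp Require Import ring lra.
Import Order.TTheory GRing.Theory Num.Theory.
Local Open Scope classical_set_scope.
Local Open Scope ring_scope.

Set Implicit Arguments.
Unset Strict Implicit.
Unset Printing Implicit Defensive.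

(* Everything rests on comparing the travel cost with the chemical distance. If
   [m = d_omega(x, y)], the walk cannot hit [y] before time [m], so
   [E[exp(-lam H(y))] <= exp(-lam m)]; and it follows a shortest open path with
   probability at least [(2d)^-m]. Hence [lam m <= a_lam(x, y) <= (lam + log 2d) m].
   Taking [x = 0] and [y = kz] for the infinitely many [k] with [kz] in the infinite
   cluster (an event of positive probability, by shift invariance and reverse Fatou)
   and dividing by [k] gives [lam mu <= alpha_lam <= (lam + log 2d) mu] on [Z^d], hence
   on [R^d] by homogeneity and subadditivity. So [alpha_lam(x) - lam] stays below
   [log 2d] when [mu(x) <= 1] and is unbounded in [lam] when [mu(x) > 1]. *)

Section RandomWalk.
Context {R : realType} {d : nat} (w : config d).

Lemma hitp_ge0 n x y : 0 <= hitp R w n x y.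
Proof.
elim: n x => [|n IH] x /=; first by case: eqP.
case: eqP => // _; apply: sumr_ge0 => i _; apply: sumr_ge0 => s _.
by rewrite mulr_ge0 ?divr_ge0.
Qed.

Lemma hitp_neq0_reach n x y : hitp R w n x y != 0 -> reach w n x y.
Proof.
elim: n x => [|n IH] x /=; first by case: (x =P y) => [//|_]; rewrite eqxx.
case: (x =P y) => [_|_]; first by rewrite eqxx.
apply: contra_neqP => no_step; apply: big1 => i _; apply: big1 => s _.
case ho: (open_b w x i s); last by rewrite mul0r mul0r.
have [hn|/negPn/eqP ->] := boolP (hitp R w n (nbr x i s) y != 0); last by rewrite mulr0.
by case: no_step; exists (nbr x i s); split; [exists i, s | exact: IH].
Qed.

Lemma degree_le x : (degree w x <= 2 * d)%N.
Proof.
rewrite mul2n -muln2 -[X in (X * 2)%N]card_ord -sum_nat_const.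
apply: leq_sum => i _.
by rewrite big_bool; case: (open_b w x i true); case: (open_b w x i false).
Qed.

Lemma sum_jump_prob_le1 x :
  \sum_(i < d) \sum_(s : bool) ((open_b w x i s)%:R / (degree w x)%:R : R) <= 1.
Proof.
have -> : \sum_(i < d) \sum_(s : bool) ((open_b w x i s)%:R / (degree w x)%:R : R)
    = (degree w x)%:R / (degree w x)%:R.
  rewrite /degree natr_sum mulr_suml; apply: eq_bigr => i _.
  by rewrite natr_sum mulr_suml.
have [->|hx] := eqVneq (degree w x) 0%N; first by rewrite mul0r.
by rewrite divff // pnatr_eq0.
Qed.

Lemma sum_hitp_le1 N x y : \sum_(n < N) hitp R w n x y <= 1.
Proof.
elim: N x => [|N IH] x; first by rewrite big_ord0.
rewrite big_ord_recl /=; case: (x =P y) => [_|_].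
  by rewrite big1 ?addr0 // => n _ /=; case: eqP.
rewrite add0r exchange_big /=; apply: le_trans (sum_jump_prob_le1 x).
apply: ler_sum => i _; rewrite exchange_big /=; apply: ler_sum => s _.
by rewrite -mulr_sumr -[X in _ <= X]mulr1 ler_wpM2l ?divr_ge0.
Qed.

Definition shortest m x y := reach w m x y /\ forall k, (k < m)%N -> ~ reach w k x y.

Lemma exists_shortest x y : (exists n, reach w n x y) -> exists m, shortest m x y.
Proof.
move=> [n hn]; have exP : exists n, `[< reach w n x y >] by exists n; exact/asboolP.
case: (ex_minnP exP) => m /asboolP Pm Hmin; exists m; split => // k km /asboolP/Hmin.
by rewrite leqNgt km.
Qed.

Lemma chem_dist_shortest m x y : shortest m x y -> chem_dist R w x y = (m%:R)%:E.
Proof.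
move=> [hr hmin]; apply/eqP; rewrite eq_le; apply/andP; split.
  by apply: ereal_inf_lbound; exists m.
apply/ereal_infP => _ [n hn <-]; rewrite lee_fin ler_nat leqNgt.
by apply/negP => /hmin.
Qed.

Lemma chem_dist_lt_pinfty x y : (chem_dist R w x y < +oo)%E -> exists n, reach w n x y.
Proof.
apply: contraPP => hn; rewrite /chem_dist.
suff -> : [set (n%:R)%:E | n in [set n | reach w n x y]] = set0 :> set (\bar R).
  by rewrite ereal_inf0 ltxx.
by apply/seteqP; split => // e [n hr _]; case: hn; exists n.
Qed.

(* Along a shortest open path every step has probability at least [1/(2d)]. *)
Lemma hitp_shortest m x y : shortest m x y -> ((2 * d)%:R^-1) ^+ m <= hitp R w m x y.
Proof.
elim: m x => [|m IH] x; first by move=> [/= -> _]; rewrite eqxx expr0.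
move=> [[z [[i [s [-> ho]]] hr]] hmin] /=.
case: (x =P _) => [exy|_]; first by exfalso; apply: (hmin 0%N); rewrite //= exy.
have hz : shortest m (nbr x i s) y.
  split=> // k km hk; apply: (hmin k.+1) => //.
  by exists (nbr x i s); split => //; exists i, s.
have hd : (0 < degree w x)%N.
  by rewrite /degree (bigD1 i) //= (bigD1 s) //= ho ltn_addr ?ltn_addr.
have term_ge0 j t :
    0 <= (open_b w x j t)%:R / (degree w x)%:R * hitp R w m (nbr x j t) y.
  by rewrite mulr_ge0 ?divr_ge0 ?hitp_ge0.
rewrite (bigD1 i) //= (bigD1 s) //= -addrA ler_wpDr //.
  by rewrite addr_ge0 ?sumr_ge0 // => j _; apply: sumr_ge0.
rewrite ho exprS mul1r ler_pM ?invr_ge0 ?exprn_ge0 ?invr_ge0 ?IH //.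
by rewrite lef_pV2 ?ler_nat ?degree_le // posrE ltr0n // (leq_trans hd) ?degree_le.
Qed.

End RandomWalk.

Section TravelCost.
Context {R : realType} {d : nat} (w : config d) (lam : R).

Lemma hit_gen_ge0 x y : (0 <= hit_gen lam w x y)%E.
Proof.
by apply: nneseries_ge0 => n _ _; rewrite lee_fin mulr_ge0 ?expR_ge0 ?hitp_ge0.
Qed.

Lemma hit_gen_le_shortest m x y :
  0 <= lam -> shortest w m x y -> (hit_gen lam w x y <= (expR (- lam * m%:R))%:E)%E.
Proof.
move=> hl [hr hmin]; apply: lime_le.
  by apply: is_cvg_nneseries => n _ _; rewrite lee_fin mulr_ge0 ?expR_ge0 ?hitp_ge0.
apply: nearW => N; rewrite sumEFin lee_fin.
apply: (@le_trans _ _ (\sum_(0 <= n < N) expR (- lam * m%:R) * hitp R w n x y)).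
  apply: ler_sum => n _; have [nm|mn] := ltnP n m.
    suff -> : hitp R w n x y = 0 by rewrite !mulr0.
    by apply: contra_notP (hmin n nm) => /eqP /hitp_neq0_reach.
  by rewrite ler_wpM2r ?hitp_ge0 // ler_expR !mulNr lerN2 ler_wpM2l // ler_nat.
rewrite -mulr_sumr -[X in _ <= X]mulr1 ler_wpM2l ?expR_ge0 //.
by rewrite big_mkord sum_hitp_le1.
Qed.

Lemma hit_gen_ge_shortest m x y : shortest w m x y ->
  ((expR (- lam * m%:R) * ((2 * d)%:R^-1) ^+ m)%:E <= hit_gen lam w x y)%E.
Proof.
move=> hm; have hnn n : (0 <= n)%N -> xpredT n ->
    (0 <= (expR (- lam * n%:R) * hitp R w n x y)%:E)%E.
  by move=> _ _; rewrite lee_fin mulr_ge0 ?expR_ge0 ?hitp_ge0.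
apply: le_trans (nneseries_lim_ge m.+1 hnn).
rewrite big_nat_recr //= sumEFin lee_fin ler_wpDl ?ler_wpM2l ?expR_ge0 ?hitp_shortest //.
by apply: sumr_ge0 => n _; rewrite mulr_ge0 ?expR_ge0 ?hitp_ge0.
Qed.

Lemma travel_cost_ge_shortest m x y : 0 <= lam -> shortest w m x y ->
  ((lam * m%:R)%:E <= travel_cost lam w x y)%E.
Proof.
move=> hl hm; rewrite /travel_cost; case: ifPn => [_|hne]; first by rewrite leey.
have hle := hit_gen_le_shortest hl hm.
have hfin : hit_gen lam w x y \is a fin_num.
  by rewrite ge0_fin_numE ?hit_gen_ge0 // (le_lt_trans hle) ?ltry.
move: hne hle (hit_gen_ge0 x y); rewrite -(fineK hfin) lee_fin eqe => hne hle hge.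
rewrite lee_fin lerNr -mulNr -(expRK (- lam * m%:R)) ler_ln ?posrE ?expR_gt0 //.
by rewrite lt_neqAle eq_sym hne -lee_fin.
Qed.

Lemma travel_cost_le_shortest m x y : (0 < d)%N -> 0 <= lam -> shortest w m x y ->
  (travel_cost lam w x y <= (m%:R * (lam + ln ((2 * d)%:R : R)))%:E)%E.
Proof.
move=> d0 hl hm.
have hd : (0 : R) < (2 * d)%:R by rewrite ltr0n muln_gt0.
set c := expR (- lam * m%:R) * ((2 * d)%:R^-1) ^+ m.
have c0 : 0 < c by rewrite mulr_gt0 ?expR_gt0 // exprn_gt0 // invr_gt0.
have hge := hit_gen_ge_shortest hm; have hle := hit_gen_le_shortest hl hm.
have hfin : hit_gen lam w x y \is a fin_num.
  by rewrite ge0_fin_numE ?hit_gen_ge0 // (le_lt_trans hle) ?ltry.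
have hpos : 0 < fine (hit_gen lam w x y).
  by rewrite -lte_fin fineK // (lt_le_trans _ hge) // lte_fin.
rewrite /travel_cost -(fineK hfin) eqe (gt_eqF hpos) lee_fin lerNl.
have -> : - (m%:R * (lam + ln (2 * d)%:R)) = ln c.
  rewrite /c lnM ?posrE ?expR_gt0 ?exprn_gt0 ?invr_gt0 // expRK lnXn ?invr_gt0 //.
  by rewrite lnV ?posrE // mulrDr mulNrn -mulr_natl; ring.
by rewrite ler_ln ?posrE // -lee_fin fineK.
Qed.

End TravelCost.

Section Seminorm.
Context {R : realType} {d : nat} (f : 'rV[R]_d -> R) (hf : seminorm f).

Lemma seminormZ (t : R) x : f (t *: x) = `|t| * f x.
Proof. exact: hf.2. Qed.

Lemma seminorm0 : f 0 = 0.
Proof. by rewrite -(scale0r 0) seminormZ normr0 mul0r. Qed.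

Lemma seminormN x : f (- x) = f x.
Proof. by rewrite -scaleN1r seminormZ normrN normr1 mul1r. Qed.

Lemma seminorm_ge0 x : 0 <= f x.
Proof.
have := hf.1 x (- x); rewrite subrr seminorm0 seminormN => h.
by rewrite -(@pmulr_rge0 _ 2) // mulr2n mulrDl !mul1r.
Qed.

Lemma seminorm_sum (I : finType) (F : I -> 'rV[R]_d) : f (\sum_i F i) <= \sum_i f (F i).
Proof.
elim/big_rec2: _ => [|i y1 y2 _ h]; first by rewrite seminorm0.
by apply: le_trans (hf.1 _ _) _; rewrite lerD2l.
Qed.

Lemma seminorm_le_coord x : f x <= \sum_(i < d) `|x 0 i| * f (delta_mx 0 i).
Proof.
rewrite {1}[x]matrix_sum_delta big_ord1; apply: le_trans (seminorm_sum _) _.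
by apply: ler_sum => i _; rewrite seminormZ.
Qed.

End Seminorm.

Lemma ler_of_ler_add_divSn {R : realType} (a b K : R) : 0 <= K ->
  (forall n : nat, a <= b + K / n.+1%:R) -> a <= b.
Proof.
move=> K0 H; apply/ler_addgt0Pr => e e0.
have hn := archi_boundP (divr_ge0 K0 (ltW e0)).
apply: le_trans (H (Num.Def.archi_bound (K / e))) _; rewrite lerD2l.
rewrite ler_pdivrMr ?ltr0n // mulrC -ler_pdivrMr //.
by apply: ltW; apply: lt_le_trans hn _; rewrite ler_nat.
Qed.

Definition floor_mx {R : realType} {d : nat} (x : 'rV[R]_d) : vertex d :=
  \row_i Num.floor (x 0 i).

Lemma seminorm_sub_floor {R : realType} {d : nat} (f : 'rV[R]_d -> R) (N : R) x :
  seminorm f -> 0 < N ->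
  f (x - N^-1 *: toR R (floor_mx (N *: x))) <= (\sum_(i < d) f (delta_mx 0 i)) / N.
Proof.
move=> hf N0; apply: le_trans (seminorm_le_coord hf _) _.
rewrite mulr_suml; apply: ler_sum => i _; rewrite mulrC ler_wpM2l ?seminorm_ge0 //.
rewrite !mxE; set k := Num.floor _.
have -> : x 0 i - N^-1 * k%:~R = N^-1 * (N * x 0 i - k%:~R).
  by rewrite mulrBr mulrA mulVf ?mul1r ?lt0r_neq0.
rewrite normrM gtr0_norm ?invr_gt0 // -[X in _ <= X]mulr1 ler_wpM2l ?invr_ge0 ?ltW //.
rewrite ger0_norm ?subr_ge0 ?ge_floor //.
by rewrite ltrBlDl -intrD1 lt_succ_floor.
Qed.

Lemma seminorm_le_of_lattice {R : realType} {d : nat} (f g : 'rV[R]_d -> R) (c : R) :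
  seminorm f -> seminorm g -> 0 <= c ->
  (forall z : vertex d, f (toR R z) <= c * g (toR R z)) -> forall x, f x <= c * g x.
Proof.
move=> hf hg c0 H x.
set Cf := \sum_(i < d) f (delta_mx 0 i); set Cg := \sum_(i < d) g (delta_mx 0 i).
have Cf0 : 0 <= Cf by apply: sumr_ge0 => i _; exact: seminorm_ge0.
have Cg0 : 0 <= Cg by apply: sumr_ge0 => i _; exact: seminorm_ge0.
apply: (@ler_of_ler_add_divSn _ _ _ (c * Cg + Cf)); first by rewrite addr_ge0 ?mulr_ge0.
move=> n; set N : R := n.+1%:R; have N0 : 0 < N by rewrite ltr0n.
have Ninv0 : 0 <= N^-1 by rewrite invr_ge0 ltW.
set y := N^-1 *: toR R (floor_mx (N *: x)); set v := x - y.
have hgy : g y <= g x + Cg / N.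
  rewrite -[y](subKr x) -/v; apply: le_trans (hg.1 _ _) _.
  by rewrite seminormN // lerD2l seminorm_sub_floor.
have hfy : f y <= c * g y by rewrite /y !seminormZ // ger0_norm // mulrCA ler_wpM2l.
rewrite -{1}[x](subrK y) -/v; apply: le_trans (hf.1 _ _) _.
apply: le_trans (lerD (seminorm_sub_floor _ hf N0) (le_trans hfy (ler_wpM2l c0 hgy))) _.
by rewrite -/Cf mulrDr addrCA mulrA -mulrDl [Cf + _]addrC.
Qed.

Section Cylinders.
Context {d : nat}.

Definition cyl (s : seq (edge d)) (b : edge d -> bool) : set (config d) :=
  [set w : config d | forall e, e \in s -> w e = b e].

Lemma measurable_edge (e : edge d) (b : bool) : measurable [set w : config d | w e = b].
Proof. by apply: sub_sigma_algebra; exists e, b. Qed.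

Lemma measurable_cyl s b : measurable (cyl s b).
Proof.
elim: s => [|e s IH]; first by rewrite (_ : cyl _ _ = setT) //; apply/seteqP; split.
rewrite (_ : cyl _ _ = [set w : config d | w e = b e] `&` cyl s b).
  exact: measurableI (measurable_edge _ _) IH.
apply/seteqP; split => w.
  by move=> h; split => [|e' he']; apply: h; rewrite inE ?eqxx ?he' ?orbT.
by move=> [h1 h2] e'; rewrite inE => /orP[/eqP->//|]; exact: h2.
Qed.

Lemma cyl_undup s b : cyl (undup s) b = cyl s b.
Proof. by apply/seteqP; split => w h e he; apply: h; rewrite ?mem_undup in he *. Qed.

Definition cyl_system : set (set (config d)) :=
  [set A | A = set0 \/ exists s b, A = cyl s b].

Lemma cyl_system_generates : measurable = <<s cyl_system >>.
Proof.
apply/seteqP; split; apply: smallest_sub; try exact: smallest_sigma_algebra.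
  move=> _ [e [b ->]]; apply: sub_sigma_algebra; right.
  exists [:: e], (fun _ => b); apply/seteqP; split => w.
    by move=> h e'; rewrite inE => /eqP ->.
  by apply; rewrite inE.
by move=> _ [->|[s [b ->]]]; [exact: measurable0|exact: measurable_cyl].
Qed.

Lemma cyl_system_setI_closed : setI_closed cyl_system.
Proof.
move=> A B [->|[s [b ->]]]; first by left; rewrite set0I.
move=> [->|[s' [b' ->]]]; first by left; rewrite setI0.
case: (pselect (exists e, [/\ e \in s, e \in s' & b e <> b' e])).
  move=> [e [h1 h2 h3]]; left; apply/seteqP; split => // w [/(_ e h1) ha /(_ e h2) hb].
  by apply: h3; rewrite -ha -hb.
move=> hno; right; exists (s ++ s'), (fun e => if e \in s then b e else b' e).
apply/seteqP; split => w.
  move=> [h1 h2] e; rewrite mem_cat => /orP[he|he]; first by rewrite he; exact: h1.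
  by case: ifP => hs; [exact: h1|exact: h2].
move=> h; split => e he; first by have := h e; rewrite mem_cat he /=; apply.
have := h e; rewrite mem_cat he orbT => /(_ isT).
case: ifP => // hs ->; case: (b e =P b' e) => // hne; case: hno.
by exists e.
Qed.

Lemma measure_cyl_unique {R : realType} (m1 m2 : {measure set (config d) -> \bar R}) :
  (m1 setT < +oo)%E -> (forall s b, uniq s -> m1 (cyl s b) = m2 (cyl s b)) ->
  forall A, measurable A -> m1 A = m2 A.
Proof.
move=> hT h A mA.
apply: (measure_unique cyl_system (fun _ => setT)) => //.
- exact: cyl_system_generates.
- exact: cyl_system_setI_closed.
- by move=> _; right; exists [::], (fun _ => true); apply/seteqP; split.
- by apply/seteqP; split => // w _; exists 0%N.
- move=> B [->|[s [b ->]]]; rewrite ?measure0 //.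
  by rewrite -cyl_undup; apply: h; exact: undup_uniq.
Qed.

Lemma bernoulli_perc_unique {R : realType} (P1 P2 : probability (config d) R) p :
  bernoulli_perc P1 p -> bernoulli_perc P2 p -> forall A, measurable A -> P1 A = P2 A.
Proof.
move=> h1 h2; apply: measure_cyl_unique => [|s b us].
  exact: le_lt_trans (probability_le1 P1 measurableT) (ltry _).
exact: etrans (h1 s b us) (esym (h2 s b us)).
Qed.

Lemma bernoulli_perc_ge0 {R : realType} (P : probability (config d) R) p :
  (0 < d)%N -> bernoulli_perc P p -> 0 <= p.
Proof.
move=> d0 hb; have := hb [:: (0, Ordinal d0)] (fun _ => true) isT.
by rewrite big_seq1 -lee_fin => <-.
Qed.

End Cylinders.

Section Shift.
Context {d : nat}.

Definition shift (u : vertex d) (w : config d) : config d := fun e => w (e.1 + u, e.2).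

Lemma measurable_shift u : measurable_fun setT (shift u).
Proof.
apply: (@measurability _ _ (config d) (config d) setT (shift u) (cylinders d)) => //.
move=> _ [_ [e [b ->]] <-]; rewrite setTI.
exact: (measurable_edge (e.1 + u, e.2) b).
Qed.

Lemma bernoulli_perc_shift {R : realType} (P : probability (config d) R) p u :
  bernoulli_perc P p -> forall A, measurable A -> P (shift u @^-1` A) = P A.
Proof.
move=> hb A mA; have mf := measurable_shift u.
pose Pu : {measure set (config d) -> \bar R} := pushforward P (shift u).
suff : P A = Pu mf A by move=> ->.
apply: measure_cyl_unique => // [|s b us].
  exact: le_lt_trans (probability_le1 P measurableT) (ltry _).
pose sh e : edge d := (e.1 + u, e.2).
have sh_inj : injective sh by move=> [x i] [y j] [/addIr -> ->].
have -> : Pu mf (cyl s b) = P (cyl (map sh s) (fun e => b (e.1 - u, e.2))).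
  rewrite /Pu /pushforward; congr (P _); apply/seteqP; split => w /=.
    by move=> h _ /mapP [[x i] he ->] /=; rewrite addrK; apply: h.
  by move=> h [x i] he; have := h (sh (x, i)) (map_f sh he); rewrite /= addrK.
have us' : uniq (map sh s) by rewrite map_inj_uniq.
apply: etrans (hb s b us) (esym (etrans (hb _ _ us') _)).
rewrite big_map; congr (_%:E).
by apply: eq_bigr => -[x i] _; rewrite /= addrK.
Qed.

Lemma open_b_shift (w : config d) u x i s : open_b (shift u w) x i s = open_b w (x + u) i s.
Proof. by case: s => //=; rewrite /shift /= addrAC. Qed.

Lemma nbrD (x u : vertex d) i s : nbr (x + u) i s = nbr x i s + u.
Proof. by case: s; rewrite /nbr addrAC. Qed.

Lemma reach_shift (w : config d) u n x y :
  reach (shift u w) n x y <-> reach w n (x + u) (y + u).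
Proof.
elim: n x => [|n IH] x /=; first by split => [->//|/addIr].
split=> -[z [[i [s [-> ho]]] hr]].
  exists (nbr x i s + u); split; last exact/IH.
  by exists i, s; rewrite nbrD -open_b_shift.
exists (nbr x i s); split; first by exists i, s; rewrite open_b_shift.
by apply/IH; rewrite -nbrD.
Qed.

Lemma infinite_setP (T : eqType) (S : set T) :
  infinite_set S <-> forall L : seq T, exists y, S y /\ y \notin L.
Proof.
split=> [hS L|h /finite_seqP [L hL]]; last first.
  by have [y [Sy hy]] := h L; move: Sy; rewrite hL /= (negbTE hy).
apply: contrapT => hno; apply: hS; apply: (@sub_finite_set _ _ [set` L]).
  by move=> y Sy; apply: contrapT => /negP hy; apply: hno; exists y.
by apply/finite_seqP; exists L.
Qed.

Lemma Cinf_shift (w : config d) u x : Cinf (shift u w) x <-> Cinf w (x + u).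
Proof.
rewrite /Cinf /= !infinite_setP; split => h L.
  have [y [[n hy] hyL]] := h (map (fun y => y - u) L).
  exists (y + u); split; first by exists n; apply/reach_shift.
  by apply: contra hyL => hL; apply/mapP; exists (y + u); rewrite ?addrK.
have [y [[n hy] hyL]] := h (map (fun y => y + u) L).
exists (y - u); split; first by exists n; apply/reach_shift; rewrite subrK.
by apply: contra hyL => hL; apply/mapP; exists (y - u); rewrite ?subrK.
Qed.

End Shift.

Section Measurability.
Context {d : nat}.

Lemma measurable_open_b (x : vertex d) i s : measurable [set w : config d | open_b w x i s].
Proof. by case: s; apply: measurable_edge. Qed.

Lemma measurable_reach n (x y : vertex d) : measurable [set w : config d | reach w n x y].
Proof.
elim: n x => [|n IH] x /=.
  have [->|/negbTE h] := eqVneq x y.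
    by rewrite (_ : [set _ | y = y] = setT) //; apply/seteqP.
  by rewrite (_ : [set _ | x = y] = set0) //; apply/seteqP; split => // w /eqP; rewrite h.
rewrite (_ : [set w : config d | _] = \bigcup_(i : 'I_d) \bigcup_(s : bool)
   ([set w : config d | open_b w x i s] `&` [set w | reach w n (nbr x i s) y])).
  apply: (countable_bigcupT_measurable (countableP _)) => i.
  apply: (countable_bigcupT_measurable (countableP _)) => s.
  exact: measurableI (measurable_open_b _ _ _) (IH _).
apply/seteqP; split => w.
  by move=> [z [[i [s [-> ho]]] hr]]; exists i => //; exists s.
by move=> [i _ [s _ [ho hr]]]; exists (nbr x i s); split => //; exists i, s.
Qed.

Lemma measurable_Cinf (x : vertex d) : measurable [set w : config d | Cinf w x].
Proof.
rewrite (_ : [set w : config d | Cinf w x] = \bigcap_(L : seq (vertex d))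
    \bigcup_(y : vertex d) \bigcup_(n : nat)
      (if y \in L then set0 else [set w : config d | reach w n x y])).
  rewrite -[X in measurable X]setCK setC_bigcap; apply: measurableC.
  apply: (countable_bigcupT_measurable (countableP _)) => L; apply: measurableC.
  apply: (countable_bigcupT_measurable (countableP _)) => y.
  apply: (countable_bigcupT_measurable (countableP _)) => n.
  case: ifP => _; [exact: measurable0|exact: measurable_reach].
apply/seteqP; split => w; rewrite /Cinf /= infinite_setP => h L.
  by have [y [[n hy] hyL]] := h L; exists y => //; exists n => //; rewrite (negbTE hyL).
have [y _ [n _]] := h L I.
by case: ifP => // hyL hr; exists y; split; [exists n|rewrite hyL].
Qed.

End Measurability.

Definition Cinf_io {d : nat} (z : vertex d) (w : config d) :=
  forall n, exists2 k, (n <= k)%N & Cinf w (z *+ k).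

Section Recurrence.
Context {R : realType} {d : nat} (P : probability (config d) R) (p : R) (z : vertex d).
Hypothesis hb : bernoulli_perc P p.

Let A k := [set w : config d | Cinf w (z *+ k)].

Let measurable_A k : measurable (A k).
Proof. exact: measurable_Cinf. Qed.

Let A_shift k j : A (k + j) = shift (z *+ j) @^-1` A k.
Proof. by apply/seteqP; split => w; rewrite /A /= Cinf_shift mulrnDr. Qed.

(* Stationarity and reverse Fatou: [P (limsup A) >= limsup P (A k) = P (A 0)]. *)
Lemma measure_limsup_Cinf_ge : (P (A 0) <= P (lim_sup_set A))%E.
Proof.
have PA k : P (A k) = P (A 0) by rewrite -[k]add0n A_shift (bernoulli_perc_shift _ hb).
have hfin : (P (\bigcup_(k >= 0) A k) < +oo)%E.
  by apply: le_lt_trans (probability_le1 _ _) (ltry _); apply: bigcup_measurable.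
have hc := lim_sup_set_cvg P A measurable_A hfin.
rewrite -(cvg_lim _ hc) //; apply: lime_ge; first by apply/cvg_ex; eexists; exact: hc.
apply: nearW => n; rewrite -(PA n); apply: le_measure; rewrite ?inE //.
- by apply: bigcup_measurable => k _.
- by move=> w hw; exists n => /=.
Qed.

Lemma limsup_Cinf_sub :
  lim_sup_set A `<=` \bigcup_j (shift (z *+ j) @^-1` [set w | Cinf w 0 /\ Cinf_io z w]).
Proof.
move=> w hw; have [j _ hj] := hw 0%N I; exists j => //; split.
  by rewrite /= Cinf_shift add0r.
move=> n; have [k hk hAk] := hw (n + j)%N I.
have jk : (j <= k)%N := leq_trans (leq_addl n j) hk.
exists (k - j)%N; first by rewrite leq_subRL // addnC.
by apply/Cinf_shift; rewrite -mulrnDr subnK.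
Qed.

Lemma Cinf_io_not_negligible : ~ P.-negligible [set w | Cinf w 0] ->
  ~ P.-negligible [set w | Cinf w 0 /\ Cinf_io z w].
Proof.
move=> hA0 hN; apply: hA0.
have [N [mN PN0 subN]] : P.-negligible (lim_sup_set A).
  apply: negligibleS limsup_Cinf_sub _; apply: negligible_bigcup => j.
  have [N [mN PN0 sub]] := hN.
  exists (shift (z *+ j) @^-1` N); split => [||w /sub //].
    by rewrite -[X in measurable X]setTI; exact: measurable_shift.
  exact: etrans (bernoulli_perc_shift _ hb mN) PN0.
exists (A 0); split; [exact: measurable_A| |by rewrite /A mulr0n].
apply/eqP; rewrite eq_le measure_ge0 andbT -PN0.
apply: le_trans measure_limsup_Cinf_ge _; apply: le_measure; rewrite ?inE //.
by apply: bigcap_measurable => [|n _]; [exists 0%N|exact: bigcup_measurable].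
Qed.

End Recurrence.

Lemma Cinf0_not_negligible {R : realType} {d : nat} (P : probability (config d) R) p :
  (0 < d)%N -> (p_c R d < p%:E)%E -> p <= 1 -> bernoulli_perc P p ->
  ~ P.-negligible [set w : config d | Cinf w 0].
Proof.
move=> d0 hpc hp1 hb hneg; have: (p%:E <= p_c R d)%E.
  apply: ereal_sup_ubound; exists p => //; split.
    by rewrite (bernoulli_perc_ge0 d0 hb).
  move=> P' hb'; have [N [mN PN sub]] := hneg; exists N; split => //.
  by rewrite (bernoulli_perc_unique hb' hb mN).
by rewrite leNgt hpc.
Qed.

Lemma exists_good_config {R : realType} {d : nat} (P : probability (config d) R) p
    (z : vertex d) (Q1 Q2 : config d -> Prop) :
  (0 < d)%N -> (p_c R d < p%:E)%E -> p <= 1 -> bernoulli_perc P p ->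
  {ae P, forall w, Q1 w} -> {ae P, forall w, Q2 w} ->
  exists w : config d, [/\ Cinf w 0, Cinf_io z w, Q1 w & Q2 w].
Proof.
move=> d0 hpc hp1 hb h1 h2; apply: contrapT => hno.
apply: (Cinf_io_not_negligible (z := z) hb (Cinf0_not_negligible d0 hpc hp1 hb)).
apply: negligibleS (negligibleU h1 h2) => w [hw0 hio] /=.
by apply: contrapT => /not_orP [/contrapT hq1 /contrapT hq2]; apply: hno; exists w.
Qed.

Lemma toR_mulrn {R : realType} {d : nat} (z : vertex d) k :
  toR R (z *+ k) = k%:R *: toR R z.
Proof. by apply/rowP => i; rewrite !mxE mulmxnE mulr_natl raddfMn. Qed.

Lemma norm1_mulrn {R : realType} {d : nat} (z : vertex d) k :
  norm1 R (z *+ k) = k%:R * norm1 R z.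
Proof.
rewrite /norm1 mulr_sumr; apply: eq_bigr => i _.
by rewrite mulmxnE raddfMn normrMn mulr_natl.
Qed.

Lemma norm1_ge1 {R : realType} {d : nat} (z : vertex d) : z != 0 -> 1 <= norm1 R z.
Proof.
move=> hz; have [i hi] : exists i, z 0 i != 0.
  apply: contrapT => hn; move/eqP: hz; apply; apply/rowP => i; rewrite mxE.
  by apply/eqP; apply: contra_notT hn => h; exists i.
rewrite /norm1 (bigD1 i) //= ler_wpDr ?sumr_ge0 //.
by rewrite -intr_norm ler1z -gtz0_ge1 normr_gt0.
Qed.

Section LatticeBounds.
Context {R : realType} {d : nat} (lam : R) (f g : 'rV[R]_d -> R) (z : vertex d)
  (w : config d).
Hypotheses (d0 : (0 < d)%N) (lam0 : 0 <= lam) (hf : seminorm f) (hz : z != 0).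
Hypothesis hio : Cinf_io z w.
Hypothesis hlyap : forall eps : R, 0 < eps -> exists N : R, forall x : vertex d,
  Cinf w x -> N <= norm1 R x ->
  ((f (toR R x) - eps * norm1 R x)%:E <= travel_cost lam w 0%R x /\
   travel_cost lam w 0%R x <= (f (toR R x) + eps * norm1 R x)%:E)%E.
Hypothesis htime : forall eps : R, 0 < eps -> exists K : nat, forall k : nat,
  (K <= k)%N -> Cinf w (z *+ k) ->
  (((g (toR R z) - eps) * k%:R)%:E <= chem_dist R w 0%R (z *+ k)%R /\
   chem_dist R w 0%R (z *+ k)%R <= ((g (toR R z) + eps) * k%:R)%:E)%E.

Let a := f (toR R z).
Let b := g (toR R z).
Let c := norm1 R z.
Let L := ln ((2 * d)%:R : R).

Lemma exists_far_shortest e : 0 < e -> exists k m : nat, [/\ (0 < k)%N,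
  shortest w m 0%R (z *+ k)%R,
  (b - e) * k%:R <= m%:R <= (b + e) * k%:R &
  ((k%:R * a - e * (k%:R * c))%:E <= travel_cost lam w 0%R (z *+ k)%R
     <= (k%:R * a + e * (k%:R * c))%:E)%E].
Proof.
move=> e0; have [N hN] := hlyap e0; have [K hK] := htime e0.
have [k hk hCk] := hio (maxn (maxn K (Num.Def.archi_bound `|N|)) 1).
rewrite !geq_max in hk; case/andP: hk => /andP[hKk hNk] hk1.
have hN' : N <= norm1 R (z *+ k).
  rewrite norm1_mulrn; apply: le_trans (ler_norm N) _; apply: ltW.
  apply: lt_le_trans (archi_boundP (normr_ge0 N)) _.
  by rewrite -[leLHS]mulr1 ler_pM ?ler_nat ?norm1_ge1.
have [h3 h4] := hK k hKk hCk.
have [m hm] := exists_shortest (chem_dist_lt_pinfty (le_lt_trans h4 (ltry _))).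
rewrite (chem_dist_shortest hm) !lee_fin in h3 h4.
have [h1 h2] := hN _ hCk hN'.
rewrite toR_mulrn (seminormZ hf) ger0_norm ?ler0n // norm1_mulrn in h1 h2.
by exists k, m; split => //; apply/andP.
Qed.

Lemma lattice_bounds_eps e : 0 < e ->
  a <= b * (lam + L) + e * (c + lam + L) /\ lam * b <= a + e * (lam + c).
Proof.
move=> e0; have [k [m [k0 hm /andP[h3 h4] /andP[h1 h2]]]] := exists_far_shortest e0.
have i1 := le_trans h1 (travel_cost_le_shortest d0 lam0 hm); rewrite lee_fin -/L in i1.
have i2 := le_trans (travel_cost_ge_shortest lam0 hm) h2; rewrite lee_fin in i2.
have hL : 0 <= lam + L by rewrite addr_ge0 // ln_ge0 // ler1n muln_gt0.
have kpos : 0 < k%:R :> R by rewrite ltr0n.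
have h4L := ler_wpM2r hL h4; have h3l := ler_wpM2l lam0 h3.
split.
  suff : k%:R * (a - e * c) <= k%:R * ((b + e) * (lam + L)) by rewrite ler_pM2l //; lra.
  by nra.
suff : k%:R * (lam * (b - e)) <= k%:R * (a + e * c) by rewrite ler_pM2l //; nra.
by nra.
Qed.

End LatticeBounds.

Section FromLatticeToSpace.
Context {R : realType} {d : nat} (p : R) (P : probability (config d) R)
  (lam : R) (f g : 'rV[R]_d -> R).
Hypotheses (d0 : (0 < d)%N) (hpc : (p_c R d < p%:E)%E) (hp1 : p <= 1).
Hypotheses (hb : bernoulli_perc P p) (lam0 : 0 <= lam).
Hypotheses (hf : seminorm f) (hly : lyapunov_prop P lam f).
Hypotheses (hg : seminorm g) (htc : time_constant_prop P g).

Let L := ln ((2 * d)%:R : R).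

Lemma lattice_bounds (z : vertex d) :
  f (toR R z) <= g (toR R z) * (lam + L) /\ lam * g (toR R z) <= f (toR R z).
Proof.
have [->|hz] := eqVneq z 0.
  have -> : toR R (0 : vertex d) = 0 by apply/rowP => i; rewrite !mxE.
  by rewrite !seminorm0 // mul0r mulr0.
have [w [hw0 hio hlyw htcw]] := exists_good_config z d0 hpc hp1 hb hly (htc z).
have hbounds := lattice_bounds_eps d0 lam0 hf hz hio (hlyw hw0) (htcw hw0).
have L0 : 0 <= L by rewrite ln_ge0 // ler1n muln_gt0.
have c0 : 0 <= norm1 R z by apply: sumr_ge0.
split; [apply: (@ler_of_ler_add_divSn _ _ _ (norm1 R z + lam + L))
       |apply: (@ler_of_ler_add_divSn _ _ _ (lam + norm1 R z))]; rewrite ?addr_ge0 //.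
- by move=> n; rewrite [X in _ + X]mulrC; apply: (hbounds _ _).1; rewrite invr_gt0.
- by move=> n; rewrite [X in _ + X]mulrC; apply: (hbounds _ _).2; rewrite invr_gt0.
Qed.

Lemma seminorm_le_time_constant x : f x <= (lam + L) * g x.
Proof.
apply: seminorm_le_of_lattice => // [|z]; last by rewrite mulrC (lattice_bounds z).1.
by rewrite addr_ge0 // ln_ge0 // ler1n muln_gt0.
Qed.

Lemma time_constant_le_seminorm x : lam * g x <= f x.
Proof.
have [->|lam_neq0] := eqVneq lam 0; first by rewrite mul0r seminorm_ge0.
have lam_gt0 : 0 < lam by rewrite lt_neqAle eq_sym lam_neq0.
rewrite -ler_pdivlMl //; apply: seminorm_le_of_lattice; rewrite ?invr_ge0 // => z.
by rewrite ler_pdivlMl // (lattice_bounds z).2.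
Qed.

End FromLatticeToSpace.

Section Rate.
Context {R : realType} {d : nat} (alpha : R -> 'rV[R]_d -> R) (g : 'rV[R]_d -> R)
  (x : 'rV[R]_d).

Lemma rate_le (L : R) : 0 <= L -> 0 <= g x -> g x <= 1 ->
  (forall lam, 0 <= lam -> alpha lam x <= (lam + L) * g x) -> (rate alpha x <= L%:E)%E.
Proof.
move=> L0 g0 g1 hup; apply: ge_ereal_sup => _ [lam lam0 <-]; rewrite lee_fin lerBlDl.
by apply: le_trans (hup _ lam0) _; rewrite ler_piMr ?addr_ge0 // addrC.
Qed.

(* For [g x > 1] the choice [lam = (|r| + 1) / (g x - 1)] makes [alpha lam x - lam]
   exceed any finite value [r] of the rate. *)
Lemma rate_lt_pinfty_le1 : (forall lam, 0 <= lam -> lam * g x <= alpha lam x) ->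
  (rate alpha x < +oo)%E -> g x <= 1.
Proof.
move=> hlo hlt; rewrite leNgt; apply/negP => hgt.
have rate_ge lam : 0 <= lam -> ((alpha lam x - lam)%:E <= rate alpha x)%E.
  by move=> lam0; apply: ereal_sup_ubound; exists lam.
move: hlt (rate_ge 0 (lexx 0)); case E: (rate alpha x) => [r| |] // _ _.
have g1 : 0 < g x - 1 by rewrite subr_gt0.
set lam := (`|r| + 1) / (g x - 1).
have lam0 : 0 <= lam by rewrite divr_ge0 ?ltW // addr_ge0.
have := rate_ge lam lam0; rewrite E lee_fin => h.
have := hlo lam lam0; have e : lam * (g x - 1) = `|r| + 1 by rewrite divfK ?gt_eqF.
have := ler_norm r; nra.
Qed.

End Rate.

Unset Implicit Arguments.

Theorem mainTheorem12 (R : realType) (d : nat) (p : R)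
    (P : probability (config d) R)
    (alpha : R -> 'rV[R]_d -> R) (mu : 'rV[R]_d -> R) :
  (2 <= d)%N ->
  (p_c R d < p%:E)%E -> p <= 1 ->
  bernoulli_perc P p ->
  (forall lam : R, 0 <= lam -> seminorm (alpha lam)) ->
  (forall lam : R, 0 <= lam -> lyapunov_prop P lam (alpha lam)) ->
  seminorm mu ->
  time_constant_prop P mu ->
  [set x : 'rV[R]_d | (rate alpha x < +oo)%E] = [set x : 'rV[R]_d | mu x <= 1]
  /\ (forall x : 'rV[R]_d, (rate alpha x < +oo)%E ->
        (rate alpha x <= (ln ((2 * d)%:R : R))%:E)%E).
Proof.
move=> hd hpc hp1 hb ha hly hm htc; have d0 : (0 < d)%N by apply: leq_trans hd.
have L0 : 0 <= ln ((2 * d)%:R : R) by rewrite ln_ge0 // ler1n muln_gt0.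
have rate_finite x : (rate alpha x < +oo)%E -> mu x <= 1.
  apply: rate_lt_pinfty_le1 => lam lam0.
  exact: time_constant_le_seminorm d0 hpc hp1 hb lam0 (ha _ lam0) (hly _ lam0) hm htc x.
have rate_le_ln x : mu x <= 1 -> (rate alpha x <= (ln ((2 * d)%:R : R))%:E)%E.
  move=> mu1; apply: (rate_le (g := mu)) => // [|lam lam0]; first exact: seminorm_ge0.
  exact: seminorm_le_time_constant d0 hpc hp1 hb lam0 (ha _ lam0) (hly _ lam0) hm htc x.
split=> [|x /rate_finite /rate_le_ln //].
apply/seteqP; split=> x /=; first exact: rate_finite.
by move/rate_le_ln/le_lt_trans; apply; exact: ltry.
Qed.
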